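(* Let $(X_1,\prec_1)$, $(X_2,\prec_2)$ be finite strict posets. (i) If $(X_1\dot\cup X_2,A,\prec)$ is an alignment of these two posets, then $R=\{(x,y)\in X_1\times X_2:\{x,y\}\in A\}$ satisfies (M) and (P'), $A$ consists exactly of the edges $\{x,y\}$ with $(x,y)\in R$, and the columns are exactly the sets $\{x,y\}$ with $(x,y)\in R$ together with the singletons $\{z\}$ of elements $z$ not occurring in any pair of $R$. (ii) Conversely, if $R\subseteq X_1\times X_2$ satisfies (M) and (P'), then for the graph $(X_1\dot\cup X_2,R)$ (with edges $\{x,y\}$ for $(x,y)\in R$), whose columns are the pairs $\{x,y\}$, $(x,y)\in R$, and the singletons of unmatched elements, there exists a strict partial order $\prec$ on its columns such that $(X_1\dot\cup X_2,R,\prec)$ is an alignment of $(X_1,\prec_1)$ and $(X_2,\prec_2)$.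
   Context: Given a family of finite strict posets $(X_a,\prec_a)$, $a\in I$, with $X=\dot\bigcup_a X_a$ and a simple undirected graph $(X,A)$ with set of connected components (''columns'') $\mathcal{C}(X,A)$, an alignment is a triple $(X,A,\prec)$ where $\prec$ is a strict partial order on $\mathcal{C}(X,A)$ such that: (P1) every column induces a complete subgraph; (P2) every column contains at most one element of each $X_a$; (P3) if $x\in P$, $y\in Q$ with $x,y\in X_a$ and $x\prec_a y$ then $P\prec Q$; (P4) if $P\prec Q$, $x\in P$, $y\in Q$ with $x,y\in X_a$, then $x\prec_a y$ or $x,y$ are incomparable w.r.t. $\prec_a$. For a relation $R\subseteq X_1\times X_2$: (M) means $(x,y),(x,z)\in R$ imply $y=z$, and $(x,z),(y,z)\in R$ imply $x=y$; (P') means there is a strict partial order $\lessdot$ on $R$ such that for $(u,v),(x,y)\in R$, $u\prec_1 x$ or $v\prec_2 y$ implies $(u,v)\lessdot(x,y)$. *)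

From mathcomp Require Import all_boot.
Set Implicit Arguments. Unset Strict Implicit. Unset Printing Implicit Defensive.

Section Alignment.
Variables (T1 T2 : finType).
Notation X := (T1 + T2)%type.

Definition strict_po (T : Type) (lt : rel T) : Prop :=
  (forall x, ~~ lt x x) /\ (forall x y z, lt x y -> lt y z -> lt x z).

Definition side (x : X) : bool := if x is inl _ then true else false.

(* the family of orders, as one relation on the disjoint union;
   elements of different X_a are never related *)
Definition ltX (lt1 : rel T1) (lt2 : rel T2) : rel X :=
  fun x y => match x, y with
             | inl a, inl b => lt1 a b
             | inr a, inr b => lt2 a b
             | _, _ => false
             end.

Definition cols (A : rel X) : {set {set X}} :=
  [set [set y | connect A x y] | x : X].

Definition simple_graph (A : rel X) : Prop :=
  (forall x, ~~ A x x) /\ (forall x y, A x y = A y x).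

Definition incomparable (T : Type) (lt : rel T) (x y : T) : Prop :=
  x <> y /\ ~~ lt x y /\ ~~ lt y x.

Definition alignment (lt1 : rel T1) (lt2 : rel T2) (A : rel X)
  (prec : rel {set X}) : Prop :=
  simple_graph A /\
  (forall P, P \in cols A -> ~~ prec P P) /\
  (forall P Q S, P \in cols A -> Q \in cols A -> S \in cols A ->
      prec P Q -> prec Q S -> prec P S) /\
  (forall P, P \in cols A -> forall x y, x \in P -> y \in P -> x != y -> A x y) /\
  (forall P, P \in cols A -> forall x y, x \in P -> y \in P ->
      side x = side y -> x = y) /\
  (forall P Q, P \in cols A -> Q \in cols A -> forall x y, x \in P -> y \in Q ->
      ltX lt1 lt2 x y -> prec P Q) /\
  (forall P Q, P \in cols A -> Q \in cols A -> prec P Q -> forall x y,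
      x \in P -> y \in Q -> side x = side y ->
      ltX lt1 lt2 x y \/ incomparable (ltX lt1 lt2) x y).

Definition propM (R : T1 -> T2 -> bool) : Prop :=
  (forall x y z, R x y -> R x z -> y = z) /\
  (forall x y z, R x z -> R y z -> x = y).

Definition propP' (lt1 : rel T1) (lt2 : rel T2) (R : T1 -> T2 -> bool) : Prop :=
  exists ld : rel (T1 * T2),
    (forall p, R p.1 p.2 -> ~~ ld p p) /\
    (forall p q r, R p.1 p.2 -> R q.1 q.2 -> R r.1 r.2 -> ld p q -> ld q r -> ld p r) /\
    (forall u v x y, R u v -> R x y -> lt1 u x || lt2 v y -> ld (u, v) (x, y)).

Definition graphR (R : T1 -> T2 -> bool) : rel X :=
  fun a b => match a, b with
             | inl x, inr y => R x y
             | inr y, inl x => R x y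
             | _, _ => false
             end.

Definition matched (R : T1 -> T2 -> bool) (z : X) : bool :=
  match z with
  | inl x => [exists y, R x y]
  | inr y => [exists x, R x y]
  end.

Definition colsR (R : T1 -> T2 -> bool) : {set {set X}} :=
  [set [set inl p.1; inr p.2] | p in [set p : T1 * T2 | R p.1 p.2]]
  :|: [set [set z] | z in [set z : X | ~~ matched R z]].

End Alignment.

(* Both directions rest on one fact: in a graph where every vertex has at most
   one neighbour, the connected components are the edges and the isolated
   vertices.  In an alignment, (P2) forces every edge to join X_1 to X_2 and
   every vertex to have at most one neighbour, so the columns are the matched
   pairs and the unmatched singletons, and the column order restricted to the
   pairs is the order required by (P').  Conversely, given R, order the columns
   by the transitive closure of "some element of P lies below some element of
   Q".  It has no cycle: a singleton column {z} can be skipped along a chain,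
   because x < z < y gives x < y, while consecutive pair columns strictly
   increase for the order provided by (P'). *)

From mathcomp Require Import all_boot.
Set Implicit Arguments. Unset Strict Implicit. Unset Printing Implicit Defensive.

Lemma connect_preserved (T : finType) (e : rel T) (P : T -> Prop) x y :
  P x -> (forall a b, P a -> e a b -> P b) -> connect e x y -> P y.
Proof.
move=> Px Pe /connectP[p + ->]; elim: p x Px => //= z p IH x Px /andP[exz pz].
exact: IH (Pe _ _ Px exz) pz.
Qed.

Definition tclosure (T : finType) (e : rel T) : rel T :=
  fun x y => [exists z, e x z && connect e z y].

Lemma tclosure1 (T : finType) (e : rel T) x y : e x y -> tclosure e x y.
Proof. by move=> exy; apply/existsP; exists y; rewrite exy connect0. Qed.

Lemma tclosure_trans (T : finType) (e : rel T) : transitive (tclosure e).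
Proof.
move=> y x z /existsP[u /andP[exu cuy]] /existsP[v /andP[eyv cvz]].
apply/existsP; exists u; rewrite exu /=.
exact: connect_trans cuy (connect_trans (connect1 eyv) cvz).
Qed.

Section ShortcutAcyclic.
Variables (T : finType) (e : rel T) (good : pred T) (ld : rel T).
Hypothesis ld_irr : {in good, forall x, ~~ ld x x}.
Hypothesis ld_trans : forall x y z, good x -> good y -> good z ->
  ld x y -> ld y z -> ld x z.
Hypothesis e_ld : {in good &, forall x y, e x y -> ld x y}.
Hypothesis e_shortcut : forall x y z, ~~ good y -> e x y -> e y z -> e x z.
Hypothesis e_irr : forall x, ~~ e x x.

Lemma tclosure_shortcut x y : tclosure e x y ->
  e x y \/ exists g h, [/\ good g, good h, e x g, h = y \/ e h y & g = h \/ ld g h].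
Proof.
pose inv y := e x y \/
  exists g h, [/\ good g, good h, e x g, h = y \/ e h y & g = h \/ ld g h].
case/existsP => z /andP[exz]; apply: (connect_preserved (P := inv)); first by left.
move=> a b + eab => -[exa | [g [h [gg gh exg [ha|eha] le_gh]]]].
- have [ga | nga] := boolP (good a); last by left; exact: e_shortcut exa eab.
  by right; exists a, a; split; auto.
- by right; exists g, h; split; auto; right; rewrite ha.
- have [ga | nga] := boolP (good a); last first.
    by right; exists g, h; split; auto; right; exact: e_shortcut eha eab.
  have ld_ha := e_ld gh ga eha.
  right; exists g, a; split; auto; right.
  by case: le_gh => [->|ld_gh] //; exact: ld_trans ld_gh ld_ha.
Qed.

Lemma tclosure_irr x : ~~ tclosure e x x.
Proof.
apply/negP => /tclosure_shortcut[|[g [h [gg gh exg hx le_gh]]]].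
  exact/negP/e_irr.
have ld_le y z w : good y -> good z -> good w -> ld y z -> z = w \/ ld z w -> ld y w.
  by move=> gy gz gw lyz [<-|lzw] //; exact: ld_trans lyz lzw.
have [gx | ngx] := boolP (good x).
  have ld_xh := ld_le _ _ _ gx gg gh (e_ld gx gg exg) le_gh.
  have ld_xx : ld x x.
    case: hx => [hx|ehx]; first by rewrite hx in ld_xh.
    exact: ld_trans ld_xh (e_ld gh gx ehx).
  by move: (ld_irr gx); rewrite ld_xx.
case: hx => [hx|ehx]; first by move: ngx; rewrite -hx gh.
have ld_hh := ld_le _ _ _ gh gg gh (e_ld gh gg (e_shortcut ngx ehx exg)) le_gh.
by move: (ld_irr gh); rewrite ld_hh.
Qed.
End ShortcutAcyclic.

Definition colx (T : finType) (A : rel T) (x : T) : {set T} := [set y | connect A x y].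

Section MatchingGraph.
Variables (T : finType) (A : rel T).
Hypotheses (A_sym : symmetric A) (A_uniq : forall x y z, A x y -> A x z -> y = z).

Lemma connect_matching x y : connect A x y = (x == y) || A x y.
Proof.
apply/idP/idP => [|/orP[/eqP<-|/connect1//]]; last exact: connect0.
apply: (connect_preserved (P := fun y => (x == y) || A x y)); first by rewrite eqxx.
move=> a b /orP[/eqP<- -> | Axa Aab]; first by rewrite orbT.
by rewrite (A_uniq Aab (_ : A a x)) ?eqxx // A_sym.
Qed.

Lemma colx_edge x w : A x w -> colx A x = [set x; w].
Proof.
move=> Axw; apply/setP => y; rewrite !inE connect_matching eq_sym.
by case: eqVneq => //= _; apply/idP/eqP => [Axy|->]; [exact: A_uniq Axy Axw|].
Qed.

Lemma colx_isolated x : (forall w, ~~ A x w) -> colx A x = [set x].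
Proof.
by move=> nA; apply/setP => y; rewrite !inE connect_matching eq_sym (negbTE (nA y)) orbF.
Qed.

End MatchingGraph.

Section Columns.
Variables (T1 T2 : finType).
Local Notation X := (T1 + T2)%type.

Lemma colx_cols (A : rel X) x : colx A x \in cols A.
Proof. exact: imset_f. Qed.

Lemma cols_colx (A : rel X) K x : symmetric A -> K \in cols A -> x \in K -> K = colx A x.
Proof.
move=> As /imsetP[z _ ->]; rewrite inE => czx.
have cs : connect_sym A by apply: sym_connect_sym.
apply/setP=> y; rewrite !inE; apply/idP/idP => [czy|]; last exact: connect_trans.
by apply: connect_trans czy; rewrite cs.
Qed.

Lemma cols_disjoint (A : rel X) P Q x : symmetric A ->
  P \in cols A -> Q \in cols A -> x \in P -> x \in Q -> P = Q.
Proof. by move=> As PA QA xP xQ; rewrite (cols_colx As PA xP) (cols_colx As QA xQ). Qed.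

Definition pair_col (p : T1 * T2) : {set X} := [set inl p.1; inr p.2].

Lemma pair_col_inj : injective pair_col.
Proof.
move=> [u v] [u' v'] /setP E.
move: (E (inl u)) (E (inr v)); rewrite !inE !eqxx /=.
by move=> /esym/orP[/eqP[->]|//] /esym/eqP[->].
Qed.

Variant colsR_spec (R : T1 -> T2 -> bool) (K : {set X}) : Prop :=
  | ColsRPair p of R p.1 p.2 & K = pair_col p
  | ColsRSingleton z of ~~ matched R z & K = [set z].

Lemma colsRP (R : T1 -> T2 -> bool) K : K \in colsR R -> colsR_spec R K.
Proof.
rewrite in_setU => /orP[] /imsetP[p]; rewrite inE => Hp ->.
  exact: (ColsRPair Hp).
exact: (ColsRSingleton Hp).
Qed.

Lemma colsR_pair (R : T1 -> T2 -> bool) p : R p.1 p.2 -> pair_col p \in colsR R.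
Proof. by move=> Rp; rewrite in_setU; apply/orP; left; apply: imset_f; rewrite inE. Qed.

Lemma colsR_singleton (R : T1 -> T2 -> bool) z : ~~ matched R z -> [set z] \in colsR R.
Proof. by move=> nz; rewrite in_setU; apply/orP; right; apply: imset_f; rewrite inE. Qed.

Lemma colsR_side_inj (R : T1 -> T2 -> bool) K x y : K \in colsR R -> x \in K -> y \in K ->
  side x = side y -> x = y.
Proof.
case/colsRP => [p _|z _] ->; rewrite !inE; last by move=> /eqP-> /eqP->.
by move=> /orP[]/eqP-> /orP[]/eqP->.
Qed.

Lemma colsR_complete (R : T1 -> T2 -> bool) K x y : K \in colsR R -> x \in K -> y \in K ->
  x != y -> graphR R x y.
Proof.
case/colsRP => [[u v] /= Ruv|z _] ->; rewrite !inE; last by move=> /eqP-> /eqP->; rewrite eqxx.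
by move=> /orP[]/eqP-> /orP[]/eqP->; rewrite ?eqxx.
Qed.

Lemma cols_matching (A : rel X) : symmetric A ->
  (forall x y z, A x y -> A x z -> y = z) ->
  (forall x y, A x y -> side x != side y) ->
  cols A = colsR (fun u v => A (inl u) (inr v)).
Proof.
move=> As Au Aside; set R := fun u v => _.
have edge_matched z w : A z w -> matched R z.
  case: z w => [u|v] [u'|v'] Azw; move: (Aside _ _ Azw) => //= _; apply/existsP.
    by exists v'.
  by exists u'; rewrite /R As.
have colx_pair p : R p.1 p.2 -> colx A (inl p.1) = pair_col p /\ colx A (inr p.2) = pair_col p.
  move=> Rp; rewrite (colx_edge As Au Rp) (colx_edge As Au (_ : A (inr p.2) (inl p.1))).
    by rewrite /pair_col setUC.
  by rewrite As.
have colx_single z : ~~ matched R z -> colx A z = [set z].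
  by move=> nz; apply: (colx_isolated As Au) => w; exact: contra (edge_matched z w) nz.
apply/setP => K; apply/idP/idP; last first.
  case/colsRP => [p Rp|z nz] ->; last by rewrite -colx_single ?colx_cols.
  by rewrite -(colx_pair p Rp).1 colx_cols.
case/imsetP => z _ ->; rewrite -/(colx A z).
have [mz | nz] := boolP (matched R z); last by rewrite colx_single ?colsR_singleton.
case: z mz => [u|v] /existsP[w Rw].
  by rewrite (colx_pair (u, w) Rw).1 colsR_pair.
by rewrite (colx_pair (w, v) Rw).2 colsR_pair.
Qed.

End Columns.

Lemma prec_incomparable (T : finType) (lt : rel T) (C : {set {set T}}) (prec : rel {set T}) :
  (forall P Q x, P \in C -> Q \in C -> x \in P -> x \in Q -> P = Q) ->
  {in C, forall P, ~~ prec P P} ->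
  (forall P Q S, P \in C -> Q \in C -> S \in C -> prec P Q -> prec Q S -> prec P S) ->
  (forall P Q, P \in C -> Q \in C -> forall x y, x \in P -> y \in Q -> lt x y -> prec P Q) ->
  forall P Q, P \in C -> Q \in C -> prec P Q -> forall x y, x \in P -> y \in Q ->
  lt x y \/ incomparable lt x y.
Proof.
move=> disj irr tr lt_prec P Q PC QC pPQ x y xP yQ.
have [lxy|nlxy] := boolP (lt x y); [by left | right; split; last split] => //.
- move=> exy; rewrite -exy in yQ; move: pPQ; rewrite (disj P Q x PC QC xP yQ).
  by apply/negP; exact: irr.
- apply/negP => lyx; have := tr _ _ _ PC QC PC pPQ (lt_prec _ _ QC PC _ _ yQ xP lyx).
  by apply/negP; exact: irr.
Qed.

Section SumOrder.
Variables (T1 T2 : finType) (lt1 : rel T1) (lt2 : rel T2).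
Local Notation ltx := (ltX lt1 lt2).

Lemma ltX_side a b : ltx a b -> side a = side b.
Proof. by case: a; case: b. Qed.

Lemma strict_po_ltX : strict_po lt1 -> strict_po lt2 -> strict_po ltx.
Proof.
move=> [irr1 tr1] [irr2 tr2]; split; first by case.
by case=> [a|a] [b|b] [c|c] //=; [exact: tr1 | exact: tr2].
Qed.

Lemma pair_col_ltX p q a b : a \in pair_col p -> b \in pair_col q -> ltx a b ->
  lt1 p.1 q.1 || lt2 p.2 q.2.
Proof. by rewrite !inE => /orP[]/eqP-> /orP[]/eqP-> //= ->; rewrite ?orbT. Qed.

Lemma propP'_of_prec (C : {set {set (T1 + T2)}}) (prec : rel {set (T1 + T2)})
    (R : T1 -> T2 -> bool) :
  (forall p, R p.1 p.2 -> pair_col p \in C) ->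
  {in C, forall P, ~~ prec P P} ->
  (forall P Q S, P \in C -> Q \in C -> S \in C -> prec P Q -> prec Q S -> prec P S) ->
  (forall P Q, P \in C -> Q \in C -> forall x y, x \in P -> y \in Q -> ltx x y -> prec P Q) ->
  propP' lt1 lt2 R.
Proof.
move=> pairC irr tr lt_prec.
exists (fun p q => prec (pair_col p) (pair_col q)); split; [|split].
- by move=> p /pairC; exact: irr.
- by move=> p q r /pairC Cp /pairC Cq /pairC Cr; exact: tr.
- move=> u v x y Ruv Rxy /orP[] lt_ux.
    by apply: (lt_prec _ _ (pairC (u, v) Ruv) (pairC (x, y) Rxy) (inl u) (inl x));
      rewrite ?set21.
  by apply: (lt_prec _ _ (pairC (u, v) Ruv) (pairC (x, y) Rxy) (inr v) (inr y));
    rewrite ?set22.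
Qed.

End SumOrder.

Section AlignedGraph.
Variables (T1 T2 : finType) (A : rel (T1 + T2)).

Lemma propM_matching : symmetric A -> (forall x y z, A x y -> A x z -> y = z) ->
  propM (fun u v => A (inl u) (inr v)).
Proof.
move=> As Au; split=> [x y z Axy Axz | x y z Axz Ayz].
  exact: inr_inj (Au _ _ _ Axy Axz).
by apply: inl_inj; apply: (Au (inr z)); rewrite As.
Qed.

Lemma matching_edgeP : symmetric A -> (forall x y, A x y -> side x != side y) ->
  forall a b, A a b <-> exists x y, A (inl x) (inr y) /\
    ((a = inl x /\ b = inr y) \/ (a = inr y /\ b = inl x)).
Proof.
move=> As Aside a b; split=> [Aab | [x [y [Axy [[-> ->]|[-> ->]]]]]] //; last by rewrite As.
move: (Aside _ _ Aab); case: a b Aab => [x|y] [x'|y'] //= Aab _.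
  by exists x, y'; split; [|left].
by exists x', y; split; [rewrite As | right].
Qed.

Hypothesis A_irr : forall x, ~~ A x x.
Hypothesis col_side_inj : forall P, P \in cols A -> forall x y, x \in P -> y \in P ->
  side x = side y -> x = y.

Lemma aligned_edge_side x y : A x y -> side x != side y.
Proof.
move=> Axy; apply/eqP => sxy.
have exy : x = y.
  apply: (col_side_inj (colx_cols A x)) => //; rewrite inE; [exact: connect0 | exact: connect1].
by move: (A_irr x); rewrite {2}exy Axy.
Qed.

Lemma aligned_edge_uniq x y z : A x y -> A x z -> y = z.
Proof.
move=> Axy Axz; apply: (col_side_inj (colx_cols A x)); rewrite ?inE; try exact: connect1.
by move: (aligned_edge_side Axy) (aligned_edge_side Axz); case: (side x) (side y) (side z) => [] [] [].
Qed.

End AlignedGraph.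

Section GraphRAlignment.
Variables (T1 T2 : finType) (lt1 : rel T1) (lt2 : rel T2) (R : T1 -> T2 -> bool).
Local Notation X := (T1 + T2)%type.
Local Notation ltx := (ltX lt1 lt2).

Lemma graphR_sym : symmetric (graphR R).
Proof. by case=> [x|y] [x'|y']. Qed.

Lemma graphR_irr x : ~~ graphR R x x.
Proof. by case: x. Qed.

Lemma graphR_side x y : graphR R x y -> side x != side y.
Proof. by case: x; case: y. Qed.

Definition col_lt : rel {set X} := fun P Q =>
  [&& P \in colsR R, Q \in colsR R & [exists a in P, exists b in Q, ltx a b]].

Lemma col_ltP P Q : reflect
  [/\ P \in colsR R, Q \in colsR R & exists a b, [/\ a \in P, b \in Q & ltx a b]]
  (col_lt P Q).
Proof.
apply: (iffP and3P) => [[-> -> /existsP[a /andP[aP /existsP[b /andP[bQ lab]]]]]|].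
  by split=> //; exists a, b.
case=> -> -> [a [b [aP bQ lab]]]; split=> //.
by apply/existsP; exists a; rewrite aP; apply/existsP; exists b; rewrite bQ.
Qed.

Definition pair_cols : {set {set X}} := [set pair_col p | p in [set p | R p.1 p.2]].

Definition pair_col_rel (ld : rel (T1 * T2)) : rel {set X} := fun P Q =>
  [exists p, exists q, [&& R p.1 p.2, R q.1 q.2, P == pair_col p, Q == pair_col q & ld p q]].

Hypotheses (RM : propM R) (po1 : strict_po lt1) (po2 : strict_po lt2).

Lemma graphR_uniq x y z : graphR R x y -> graphR R x z -> y = z.
Proof.
case: RM => M1 M2.
by case: x y z => [u|v] [x|y] [x'|y'] //= R1 R2; rewrite ?(M1 _ _ _ R1 R2) ?(M2 _ _ _ R1 R2).
Qed.

Lemma cols_graphR : cols (graphR R) = colsR R.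
Proof. exact: cols_matching graphR_sym graphR_uniq graphR_side. Qed.

Lemma col_lt_irr P : ~~ col_lt P P.
Proof.
apply/col_ltP => -[PR _ [a [b [aP bP lab]]]].
have [irr _] := strict_po_ltX po1 po2.
have ab := colsR_side_inj PR aP bP (ltX_side lab).
by move: lab (irr a); rewrite ab => ->.
Qed.

Lemma col_lt_shortcut P S Q : S \notin pair_cols -> col_lt P S -> col_lt S Q -> col_lt P Q.
Proof.
move=> nS /col_ltP[PR SR [a [z [aP zS laz]]]] /col_ltP[_ QR [z' [b [z'S bQ lzb]]]].
have [_ tr] := strict_po_ltX po1 po2.
case: (colsRP SR) zS z'S => [p Rp SE|z0 _ ->]; first by rewrite SE imset_f ?inE in nS.
rewrite !inE => /eqP zE /eqP z'E; apply/col_ltP; split=> //; exists a, b; split=> //.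
by apply: tr laz _; rewrite zE -z'E.
Qed.

Variable ld : rel (T1 * T2).
Hypotheses (ld_irr : forall p, R p.1 p.2 -> ~~ ld p p)
  (ld_trans : forall p q r, R p.1 p.2 -> R q.1 q.2 -> R r.1 r.2 -> ld p q -> ld q r -> ld p r)
  (ld_lt : forall u v x y, R u v -> R x y -> lt1 u x || lt2 v y -> ld (u, v) (x, y)).

Lemma col_lt_pair_col_rel P Q : P \in pair_cols -> Q \in pair_cols ->
  col_lt P Q -> pair_col_rel ld P Q.
Proof.
move=> /imsetP[[u v] + ->] /imsetP[[x y] + ->]; rewrite !inE /= => Ruv Rxy.
case/col_ltP => _ _ [a [b [aP bQ lab]]].
apply/existsP; exists (u, v); apply/existsP; exists (x, y); rewrite Ruv Rxy !eqxx /=.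
exact: ld_lt Ruv Rxy (pair_col_ltX aP bQ lab).
Qed.

Lemma pair_col_rel_irr P : ~~ pair_col_rel ld P P.
Proof.
apply/negP => /existsP[p /existsP[q /and5P[Rp _ /eqP Pp /eqP Pq lpq]]].
by move: lpq (ld_irr Rp); rewrite (pair_col_inj (etrans (esym Pp) Pq)) => ->.
Qed.

Lemma pair_col_rel_trans : transitive (pair_col_rel ld).
Proof.
move=> Q P S /existsP[p /existsP[q /and5P[Rp Rq /eqP Pp /eqP Qq lpq]]].
move=> /existsP[q' /existsP[r /and5P[_ Rr /eqP Qq' /eqP Sr lqr]]].
have qq' : q = q' by apply: pair_col_inj; rewrite -Qq -Qq'.
apply/existsP; exists p; apply/existsP; exists r; rewrite Rp Rr Pp Sr !eqxx /=.
by apply: ld_trans Rp Rq Rr lpq _; rewrite qq'.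
Qed.

Lemma tclosure_col_lt_irr P : ~~ tclosure col_lt P P.
Proof.
apply: (tclosure_irr (good := mem pair_cols) (ld := pair_col_rel ld)) => //.
- by move=> x _; exact: pair_col_rel_irr.
- by move=> x y z _ _ _; exact: pair_col_rel_trans.
- by move=> x y xp yp; exact: col_lt_pair_col_rel.
- exact: col_lt_shortcut.
- exact: col_lt_irr.
Qed.

Lemma alignment_graphR : alignment lt1 lt2 (graphR R) (tclosure col_lt).
Proof.
have lt_prec P Q : P \in cols (graphR R) -> Q \in cols (graphR R) ->
    forall x y, x \in P -> y \in Q -> ltx x y -> tclosure col_lt P Q.
  rewrite cols_graphR => PR QR x y xP yQ lxy; apply/tclosure1/col_ltP.
  by split=> //; exists x, y.
have prec_trans P Q S : P \in cols (graphR R) -> Q \in cols (graphR R) ->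
    S \in cols (graphR R) -> tclosure col_lt P Q -> tclosure col_lt Q S -> tclosure col_lt P S.
  by move=> _ _ _; exact: tclosure_trans.
have prec_irr : {in cols (graphR R), forall P, ~~ tclosure col_lt P P}.
  by move=> P _; exact: tclosure_col_lt_irr.
split; first by split; [exact: graphR_irr | exact: graphR_sym].
split; first exact: prec_irr.
split; first exact: prec_trans.
split; first by rewrite cols_graphR => P PR x y xP yP; exact: (colsR_complete PR).
split; first by rewrite cols_graphR => P PR x y xP yP; exact: (colsR_side_inj PR).
split; first exact: lt_prec.
move=> P Q PC QC pPQ x y xP yQ _.
apply: (prec_incomparable _ prec_irr prec_trans lt_prec PC QC pPQ xP yQ).
by move=> P' Q' z; exact: cols_disjoint graphR_sym.
Qed.

End GraphRAlignment.

Theorem lemma8 (T1 T2 : finType) (lt1 : rel T1) (lt2 : rel T2) :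
  strict_po lt1 -> strict_po lt2 ->
  (* (i) *)
  (forall (A : rel (T1 + T2)) (prec : rel {set T1 + T2}),
     alignment lt1 lt2 A prec ->
     let R := fun (x : T1) (y : T2) => A (inl x) (inr y) in
     [/\ propM R, propP' lt1 lt2 R,
         (forall a b : T1 + T2, A a b <->
            exists x y, R x y /\
              ((a = inl x /\ b = inr y) \/ (a = inr y /\ b = inl x)))
       & cols A = colsR R]) /\
  (* (ii) *)
  (forall R : T1 -> T2 -> bool,
     propM R -> propP' lt1 lt2 R ->
     cols (graphR R) = colsR R /\
     exists prec : rel {set T1 + T2}, alignment lt1 lt2 (graphR R) prec).
Proof.
move=> po1 po2; split.
- move=> A prec [[A_irr A_sym] [prec_irr [prec_trans [_ [col_side_inj [lt_prec _]]]]]] R.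
  have A_side := aligned_edge_side A_irr col_side_inj.
  have A_uniq := aligned_edge_uniq A_irr col_side_inj.
  have colsE : cols A = colsR R := cols_matching A_sym A_uniq A_side.
  split; [exact: propM_matching | | exact: matching_edgeP | exact: colsE].
  apply: (propP'_of_prec (C := cols A) _ prec_irr prec_trans lt_prec).
  by move=> p Rp; rewrite colsE colsR_pair.
- move=> R RM [ld [ld_irr [ld_trans ld_lt]]]; split; first exact: cols_graphR.
  by exists (tclosure (col_lt lt1 lt2 R)); exact: alignment_graphR ld_irr ld_trans ld_lt.
Qed.
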